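(* Let $\tilde U(\mathbf v,d)=V(\mathbf v,d)\setminus\{[1,0,0],[0,1,0],[0,0,1]\}$. Then the closure of $\beta(\tilde U(\mathbf v,d))$ is contained in $HC_F(\mathbf v,d)$, and $\beta$ restricts to a rational map $\beta:V(\mathbf v,d)\dashrightarrow HC_F(\mathbf v,d)$.
   Context: On $\mathbb{C}P^4$ use homogeneous coordinates $[w_0,w_1,w_2,w_3,x_1]$; let $Y$ be the surface $w_0w_3-w_1w_2=0$, $x_1^2+w_0w_3=0$. For parameters $[\mathbf v,d]=[v_{11},v_{12},v_{21},v_{22},d]\in\mathbb{C}P^4$ (complex, not all zero) set $a_1=v_{11}-v_{21}-d$, $a_2=-v_{11}-v_{21}+d$, $a_3=v_{11}+v_{21}+d$, $a_4=-v_{11}+v_{21}-d$, and let $HC_F(\mathbf v,d)$ be the set of points of $Y$ satisfying $2\big(v_{22}(w_3-w_0)-v_{12}(w_2-w_1)\big)x_1+a_1w_0w_1+a_2w_0w_2+a_3w_1w_3+a_4w_2w_3=0$. On $\mathbb{C}P^2$ with coordinates $[u_0,u_1,u_2]$ let $V(\mathbf v,d)$ be the curve $P=0$ with $P=a_4u_2^4+2(v_{22}u_0-v_{12}u_1)u_2^3-(a_3u_0^2+a_2u_1^2)u_2^2+2u_0u_1(v_{22}u_1-v_{12}u_0)u_2+a_1u_0^2u_1^2$. Define the rational map $\beta:\mathbb{C}P^2\dashrightarrow Y$, $\beta([u_0,u_1,u_2])=[-u_0u_1^2,-u_0^2u_1,u_1u_2^2,u_0u_2^2,u_0u_1u_2]$,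 which is defined away from $[1,0,0],[0,1,0],[0,0,1]$. *)

From mathcomp Require Import all_boot all_order all_algebra.
From mathcomp Require Import mpoly.
Set Implicit Arguments. Unset Strict Implicit. Unset Printing Implicit Defensive.
Import GRing.Theory Num.Theory.
Local Open Scope ring_scope.

Section Defs.
Variable C : numClosedFieldType.

(* A point of CP^n is represented by a nonzero coordinate vector 'I_n.+1 -> C;
   all the sets below are defined by homogeneous equations, so they are cones. *)
Definition nonzero_vec n (x : 'I_n -> C) := exists i, x i != 0.

Definition w0 (x : 'I_5 -> C) := x (@Ordinal 5 0 isT).
Definition w1 (x : 'I_5 -> C) := x (@Ordinal 5 1 isT).
Definition w2 (x : 'I_5 -> C) := x (@Ordinal 5 2 isT).
Definition w3 (x : 'I_5 -> C) := x (@Ordinal 5 3 isT).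
Definition xx1 (x : 'I_5 -> C) := x (@Ordinal 5 4 isT).

Definition u0 (u : 'I_3 -> C) := u (@Ordinal 3 0 isT).
Definition u1 (u : 'I_3 -> C) := u (@Ordinal 3 1 isT).
Definition u2 (u : 'I_3 -> C) := u (@Ordinal 3 2 isT).

Definition inY (x : 'I_5 -> C) : Prop :=
  nonzero_vec x /\
  w0 x * w3 x - w1 x * w2 x = 0 /\ xx1 x ^+ 2 + w0 x * w3 x = 0.

Definition a1 (v11 v12 v21 v22 d : C) := v11 - v21 - d.
Definition a2 (v11 v12 v21 v22 d : C) := - v11 - v21 + d.
Definition a3 (v11 v12 v21 v22 d : C) := v11 + v21 + d.
Definition a4 (v11 v12 v21 v22 d : C) := - v11 + v21 - d.

Definition HCF (v11 v12 v21 v22 d : C) (x : 'I_5 -> C) : Prop :=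
  inY x /\
  2 * (v22 * (w3 x - w0 x) - v12 * (w2 x - w1 x)) * xx1 x
  + a1 v11 v12 v21 v22 d * w0 x * w1 x + a2 v11 v12 v21 v22 d * w0 x * w2 x
  + a3 v11 v12 v21 v22 d * w1 x * w3 x + a4 v11 v12 v21 v22 d * w2 x * w3 x = 0.

Definition Ppoly (v11 v12 v21 v22 d : C) (u : 'I_3 -> C) : C :=
  a4 v11 v12 v21 v22 d * u2 u ^+ 4
  + 2 * (v22 * u0 u - v12 * u1 u) * u2 u ^+ 3
  - (a3 v11 v12 v21 v22 d * u0 u ^+ 2 + a2 v11 v12 v21 v22 d * u1 u ^+ 2) * u2 u ^+ 2
  + 2 * u0 u * u1 u * (v22 * u1 u - v12 * u0 u) * u2 u
  + a1 v11 v12 v21 v22 d * u0 u ^+ 2 * u1 u ^+ 2.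

Definition Vcurve (v11 v12 v21 v22 d : C) (u : 'I_3 -> C) : Prop :=
  nonzero_vec u /\ Ppoly v11 v12 v21 v22 d u = 0.

Definition not_coord_point (u : 'I_3 -> C) : Prop :=
  ~ (u1 u = 0 /\ u2 u = 0) /\ ~ (u0 u = 0 /\ u2 u = 0) /\ ~ (u0 u = 0 /\ u1 u = 0).

Definition Utilde (v11 v12 v21 v22 d : C) (u : 'I_3 -> C) : Prop :=
  Vcurve v11 v12 v21 v22 d u /\ not_coord_point u.

Definition beta (u : 'I_3 -> C) : 'I_5 -> C :=
  fun i => match val i with
           | 0 => - (u0 u * u1 u ^+ 2)
           | 1 => - (u0 u ^+ 2 * u1 u)
           | 2 => u1 u * u2 u ^+ 2
           | 3 => u0 u * u2 u ^+ 2
           | _ => u0 u * u1 u * u2 u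
           end.

Definition beta_image (S : ('I_3 -> C) -> Prop) (x : 'I_5 -> C) : Prop :=
  exists u, S u /\ x = beta u.

(* Zariski closure in CP^4 of a set S of (nonzero) coordinate vectors:
   the common zero locus of all homogeneous polynomials vanishing on S. *)
Definition zariski_closure (S : ('I_5 -> C) -> Prop) (x : 'I_5 -> C) : Prop :=
  nonzero_vec x /\
  forall (p : {mpoly C[5]}) (k : nat), p \is k.-homog ->
    (forall y, S y -> p.@[y] = 0) -> p.@[x] = 0.

End Defs.

(* Pull the three quadrics cutting out HC_F back along beta: the two
   equations of Y vanish identically on the image of beta, and the remaining
   quadric pulls back to u0 u1 P(u).  As beta(u) is nonzero away from the
   coordinate points, beta maps V minus those points into HC_F.  Since HC_F is the
   zero locus of homogeneous polynomials, it is Zariski closed and therefore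
   contains the closure of that image. *)
From mathcomp Require Import all_boot all_order all_algebra.
From mathcomp Require Import mpoly.
From mathcomp Require Import ring.
Set Implicit Arguments. Unset Strict Implicit. Unset Printing Implicit Defensive.
Import GRing.Theory Num.Theory.
Local Open Scope ring_scope.

Lemma in_seq3P (T : eqType) (P : T -> Prop) (a b c : T) :
  {in [:: a; b; c], forall s, P s} <-> [/\ P a, P b & P c].
Proof.
split=> [P_abc | [Pa Pb Pc] s]; first by split; apply: P_abc; rewrite !inE eqxx ?orbT.
by rewrite !inE => /or3P[] /eqP ->.
Qed.

Section ZeroLocus.
Variable C : numClosedFieldType.

Definition zero_locus (ps : seq {mpoly C[5]}) (x : 'I_5 -> C) : Prop :=
  nonzero_vec x /\ {in ps, forall p, p.@[x] = 0}.

Lemma zariski_closure_sub_zero_locus (ps : seq {mpoly C[5]})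
    (S : ('I_5 -> C) -> Prop) :
  {in ps, forall p, exists k, p \is k.-homog} ->
  (forall y, S y -> zero_locus ps y) ->
  forall x, zariski_closure S x -> zero_locus ps x.
Proof.
move=> ps_homog S_sub x [x_nz x_cl]; split=> // p p_ps.
have [k p_homog] := ps_homog p p_ps.
by apply: (x_cl p k p_homog) => y /S_sub [_]; apply.
Qed.

End ZeroLocus.

Section HyperplaneSection.
Variables (C : numClosedFieldType) (v11 v12 v21 v22 d : C).

Local Notation X i := ('X_(@Ordinal 5 i isT) : {mpoly C[5]}).

Lemma dhomog_XM (i j : 'I_5) : ('X_i * 'X_j : {mpoly C[5]}) \is 2.-homog.
Proof. by rewrite -mpolyXD dhomogX /= mdegD !mdeg1. Qed.

Definition Y_quadric1 : {mpoly C[5]} := X 0 * X 3 - X 1 * X 2.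
Definition Y_quadric2 : {mpoly C[5]} := X 4 * X 4 + X 0 * X 3.
Definition HC_quadric : {mpoly C[5]} :=
  (2 * v22) *: (X 3 * X 4) - (2 * v22) *: (X 0 * X 4)
  - (2 * v12) *: (X 2 * X 4) + (2 * v12) *: (X 1 * X 4)
  + a1 v11 v12 v21 v22 d *: (X 0 * X 1) + a2 v11 v12 v21 v22 d *: (X 0 * X 2)
  + a3 v11 v12 v21 v22 d *: (X 1 * X 3) + a4 v11 v12 v21 v22 d *: (X 2 * X 3).

Definition HCF_quadrics := [:: Y_quadric1; Y_quadric2; HC_quadric].

Lemma HCF_quadrics_homog : {in HCF_quadrics, forall p, p \is 2.-homog}.
Proof.
apply/in_seq3P; rewrite /Y_quadric1 /Y_quadric2 /HC_quadric.
by split; rewrite ?(rpredD, rpredN, rpredZ) // dhomog_XM.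
Qed.

Lemma meval_Y_quadric1 x : Y_quadric1.@[x] = w0 x * w3 x - w1 x * w2 x.
Proof. by rewrite mevalB !mevalM !mevalXU. Qed.

Lemma meval_Y_quadric2 x : Y_quadric2.@[x] = xx1 x ^+ 2 + w0 x * w3 x.
Proof. by rewrite mevalD !mevalM !mevalXU expr2. Qed.

Lemma meval_HC_quadric x : HC_quadric.@[x] =
    2 * (v22 * (w3 x - w0 x) - v12 * (w2 x - w1 x)) * xx1 x
    + a1 v11 v12 v21 v22 d * w0 x * w1 x + a2 v11 v12 v21 v22 d * w0 x * w2 x
    + a3 v11 v12 v21 v22 d * w1 x * w3 x + a4 v11 v12 v21 v22 d * w2 x * w3 x.
Proof.
rewrite !(mevalD, mevalN, mevalZ, mevalM, mevalXU) /w0 /w1 /w2 /w3 /xx1.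
ring.
Qed.

Lemma HCF_zero_locus x : HCF v11 v12 v21 v22 d x <-> zero_locus HCF_quadrics x.
Proof.
rewrite /HCF /inY /zero_locus -meval_Y_quadric1 -meval_Y_quadric2 -meval_HC_quadric.
split=> [[[x_nz [Y1x Y2x]] HCx] | [x_nz /in_seq3P[Y1x Y2x HCx]]] //.
by split=> //; apply/in_seq3P.
Qed.

Lemma beta_nonzero (u : 'I_3 -> C) : not_coord_point u -> nonzero_vec (beta u).
Proof.
move=> [n12 [n02 n01]].
have [u0_0 | u0_nz] := eqVneq (u0 u) 0.
  have u1_nz : u1 u != 0 by apply/eqP => u1_0; apply: n01.
  have u2_nz : u2 u != 0 by apply/eqP => u2_0; apply: n02.
  by exists (@Ordinal 5 2 isT); rewrite /beta /= mulf_neq0 ?expf_neq0.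
have [u1_0 | u1_nz] := eqVneq (u1 u) 0.
  have u2_nz : u2 u != 0 by apply/eqP => u2_0; apply: n12.
  by exists (@Ordinal 5 3 isT); rewrite /beta /= mulf_neq0 ?expf_neq0.
by exists (@Ordinal 5 0 isT); rewrite /beta /= oppr_eq0 mulf_neq0 ?expf_neq0.
Qed.

Lemma Y_quadric1_beta (u : 'I_3 -> C) : Y_quadric1.@[beta u] = 0.
Proof. by rewrite mevalB !mevalM !mevalXU /beta /=; ring. Qed.

Lemma Y_quadric2_beta (u : 'I_3 -> C) : Y_quadric2.@[beta u] = 0.
Proof. by rewrite mevalD !mevalM !mevalXU /beta /=; ring. Qed.

Lemma HC_quadric_beta (u : 'I_3 -> C) :
  HC_quadric.@[beta u] = u0 u * u1 u * Ppoly v11 v12 v21 v22 d u.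
Proof.
rewrite !(mevalD, mevalN, mevalZ, mevalM, mevalXU) /beta /= /Ppoly.
(* Generalizing the coordinates keeps [ring] from comparing them by conversion. *)
move: (u0 u) (u1 u) (u2 u) => x y z.
ring.
Qed.

Lemma beta_Utilde_HCF (u : 'I_3 -> C) :
  Utilde v11 v12 v21 v22 d u -> HCF v11 v12 v21 v22 d (beta u).
Proof.
move=> [[_ Pu] u_off]; apply/HCF_zero_locus; split; first exact: beta_nonzero.
apply/in_seq3P; split; [exact: Y_quadric1_beta | exact: Y_quadric2_beta |].
by rewrite HC_quadric_beta Pu mulr0.
Qed.

End HyperplaneSection.

Theorem lemma6p3 (C : numClosedFieldType) (v11 v12 v21 v22 d : C) :
  [|| v11 != 0, v12 != 0, v21 != 0, v22 != 0 | d != 0] ->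
  (forall x, zariski_closure (beta_image (Utilde v11 v12 v21 v22 d)) x ->
             HCF v11 v12 v21 v22 d x) /\
  (forall u, Utilde v11 v12 v21 v22 d u -> HCF v11 v12 v21 v22 d (beta u)).
Proof.
move=> _; split; last exact: beta_Utilde_HCF.
move=> x x_cl; apply/HCF_zero_locus.
apply: (zariski_closure_sub_zero_locus _ _ x_cl).
- by move=> p /HCF_quadrics_homog p_homog; exists 2%N.
- by move=> _ [u [Uu ->]]; apply/HCF_zero_locus/beta_Utilde_HCF.
Qed.
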